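(* Let $A\subseteq B\subseteq\mathbb{N}$. If $B\in\mathcal{D}$, then there exists $C\in\mathcal{D}$ such that $d(C)=\overline{\overline{d}}(A)$ and $A\subseteq C\subseteq B$. If $A\in\mathcal{D}$, then there exists $C\in\mathcal{D}$ such that $d(C)=\underline{\underline{d}}(B)$ and $A\subseteq C\subseteq B$.
   Context: $\mathbb{N}=\{1,2,3,\dots\}$. For $A\subseteq\mathbb{N}$ let $A(n)=|A\cap[1,n]|$. Let $\mathcal{D}$ be the collection of all $A\subseteq\mathbb{N}$ for which the asymptotic density $d(A)=\lim_{n\to\infty}\frac{A(n)}{n}$ exists. Define $\underline{\underline{d}}(A)=\sup\{d(B);\ B\subseteq A,\ B\in\mathcal{D}\}$ and $\overline{\overline{d}}(A)=\inf\{d(C);\ C\supseteq A,\ C\in\mathcal{D}\}$. *)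

From HB Require Import structures.
From mathcomp Require Import all_boot all_order all_algebra.
From mathcomp Require Import all_classical all_reals all_analysis.
Set Implicit Arguments. Unset Strict Implicit. Unset Printing Implicit Defensive.
Import Order.TTheory GRing.Theory Num.Theory.
Import numFieldNormedType.Exports.
Local Open Scope classical_set_scope.
Local Open Scope ring_scope.

(* Subsets of the positive integers are represented as [set nat];
   the element 0 never contributes to the counting function. *)

Definition cntR (R : realType) (A : set nat) (n : nat) : R :=
  \sum_(1 <= i < n.+1) (\1_A i : R).

Definition ratio (R : realType) (A : set nat) (n : nat) : R :=
  cntR R A n / n%:R.

Definition hasdens (R : realType) (A : set nat) : Prop :=
  cvgn (ratio R A).

Definition dens (R : realType) (A : set nat) : R := limn (ratio R A).

Definition ldens (R : realType) (A : set nat) : R :=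
  sup [set x : R | exists B : set nat, B `<=` A /\ hasdens R B /\ dens R B = x].

Definition udens (R : realType) (A : set nat) : R :=
  inf [set x : R | exists C : set nat, A `<=` C /\ hasdens R C /\ dens R C = x].

(* Let u be the upper density of A.  Build C greedily: scanning k = 1, 2, ...,
   put k into C when k is in A, or when k is in B and C(k-1) < u k.  Then C
   exceeds u n only through elements of A, so any D containing A with density
   close to u bounds C(n) from above up to a small multiple of n; and C skips
   an element of B only when it is already above u n, so B(n) bounds C(n) from
   below.  Hence d(C) = u.  The claim for the lower density of B follows by
   passing to complements, since d(~E) = 1 - d(E). *)

From Pilot Require Import Defs.
From HB Require Import structures.
From mathcomp Require Import all_boot all_order all_algebra.
From mathcomp Require Import all_classical all_reals all_analysis.
From mathcomp Require Import lra.
(* [fraction.ratio] would otherwise shadow [Defs.ratio]. *)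
Import Defs.
Import Order.TTheory GRing.Theory Num.Theory.
Import numFieldNormedType.Exports.
Local Open Scope classical_set_scope.
Local Open Scope ring_scope.

Section Counting.
Context {R : realType}.
Implicit Types (E : set nat) (n : nat).

Lemma cntR0 E : cntR R E 0 = 0.
Proof. by rewrite /cntR big_geq. Qed.

Lemma cntRS E n : cntR R E n.+1 = cntR R E n + \1_E n.+1.
Proof. by rewrite /cntR big_nat_recr. Qed.

Lemma indic_in E k : E k -> \1_E k = 1 :> R.
Proof. by move=> Ek; rewrite indicE mem_set. Qed.

Lemma indic_notin E k : ~ E k -> \1_E k = 0 :> R.
Proof. by move=> Ek; rewrite indicE memNset. Qed.

Lemma indic_ge0_le1 E k : 0 <= (\1_E k : R) <= 1.
Proof. by case: (pselect (E k)) => [/indic_in|/indic_notin] ->; rewrite lexx ler01. Qed.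

Lemma cntR_ge0 E n : 0 <= cntR R E n.
Proof.
elim: n => [|n IH]; first by rewrite cntR0.
by rewrite cntRS addr_ge0 //; case/andP: (indic_ge0_le1 E n.+1).
Qed.

Lemma cntR_le_nat E n : cntR R E n <= n%:R.
Proof.
elim: n => [|n IH]; first by rewrite cntR0.
by rewrite cntRS -natr1 lerD //; case/andP: (indic_ge0_le1 E n.+1).
Qed.

Lemma cntR_setC E n : cntR R (~` E) n = n%:R - cntR R E n.
Proof.
elim: n => [|n IH]; first by rewrite !cntR0 subr0.
rewrite !cntRS IH -natr1; case: (pselect (E n.+1)) => En.
  rewrite (indic_in _ _ En) indic_notin; [lra | exact].
by rewrite indic_in // indic_notin //; lra.
Qed.

Lemma cntR_ratio E n : cntR R E n = ratio R E n * n%:R.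
Proof.
by case: n => [|n]; rewrite ?cntR0 ?mulr0 // /ratio divfK // pnatr_eq0.
Qed.

Lemma normB_cntR_ratio E (x : R) n :
  `|cntR R E n - x * n%:R| = `|x - ratio R E n| * n%:R.
Proof. by rewrite cntR_ratio -mulrBl normrM normr_nat distrC. Qed.

Lemma ratio_cvgP E (x : R) : ratio R E @ \oo --> x <->
  forall e, 0 < e -> exists K, forall n, `|cntR R E n - x * n%:R| <= e * n%:R + K.
Proof.
split=> [/cvgrPdist_le cvgE e e0 | bound].
  have [N _ HN] := cvgE e e0.
  exists ((1 + `|x|) * N%:R) => n.
  have en : 0 <= e * n%:R by rewrite mulr_ge0 // ltW.
  have K0 : 0 <= (1 + `|x|) * N%:R by rewrite mulr_ge0 // addr_ge0.
  case: (leqP N n) => [Nn | nN].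
    rewrite normB_cntR_ratio.
    have := ler_wpM2r (ler0n R n) (HN n Nn); lra.
  have nN' : n%:R <= N%:R :> R by rewrite ler_nat ltnW.
  have xn : `|x * n%:R| <= `|x| * N%:R.
    by rewrite normrM normr_nat ler_wpM2l.
  have := ler_normB (cntR R E n) (x * n%:R).
  rewrite (ger0_norm (cntR_ge0 E n)).
  have := cntR_le_nat E n; lra.
apply/cvgrPdist_le => e e0.
have [K HK] := bound (e / 2) (divr_gt0 e0 (ltr0Sn _ _)).
near=> n.
have n0 : 0 < n%:R :> R by near: n; apply: nbhs_infty_gtr.
have Kn : K < e / 2 * n%:R.
  rewrite -ltr_pdivrMl ?divr_gt0 //; near: n; exact: nbhs_infty_gtr.
rewrite -(ler_pM2r n0) -normB_cntR_ratio.
have := HK n; lra.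
Unshelve. all: by end_near.
Qed.

Lemma ratio_ge0 E n : 0 <= ratio R E n.
Proof. by rewrite divr_ge0 ?cntR_ge0. Qed.

Lemma cvg_ratio_setC E (x : R) :
  ratio R E @ \oo --> x -> ratio R (~` E) @ \oo --> 1 - x.
Proof.
move=> /ratio_cvgP bound; apply/ratio_cvgP => e /bound [K HK]; exists K => n.
have -> : cntR R (~` E) n - (1 - x) * n%:R = - (cntR R E n - x * n%:R).
  by rewrite cntR_setC; lra.
by rewrite normrN.
Qed.

Lemma hasdens_setC E : hasdens R E -> hasdens R (~` E).
Proof. by move=> /cvg_ratio_setC /cvgP. Qed.

Lemma dens_setC E : hasdens R E -> dens R (~` E) = 1 - dens R E.
Proof. by move=> /cvg_ratio_setC; exact: cvg_lim. Qed.

Lemma dens_ge0 E : hasdens R E -> 0 <= dens R E.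
Proof. by move=> hE; apply: limr_ge => //; apply: nearW => n; exact: ratio_ge0. Qed.

Lemma dens_le1 E : hasdens R E -> dens R E <= 1.
Proof.
move=> hE; have := dens_ge0 _ (hasdens_setC _ hE).
by rewrite dens_setC // subr_ge0.
Qed.

Lemma hasdens_set0 : hasdens R set0.
Proof.
have cnt0 n : cntR R set0 n = 0 by rewrite /cntR big1 // => i _; rewrite indic0.
apply: (cvgP 0); apply/ratio_cvgP => e e0; exists 0 => n.
by rewrite cnt0 mul0r subr0 normr0 addr0 mulr_ge0 // ltW.
Qed.

Lemma hasdens_setT : hasdens R setT.
Proof. by rewrite -setC0; exact: hasdens_setC _ hasdens_set0. Qed.

End Counting.

Section DensityEnvelopes.
Context {R : realType}.
Implicit Types A B C E : set nat.

Lemma has_inf_udens A :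
  has_inf [set x : R | exists C, A `<=` C /\ hasdens R C /\ dens R C = x].
Proof.
split; first by exists (dens R setT), setT; split=> //; split=> //; exact: hasdens_setT.
by exists 0 => _ [C [_ [hC <-]]]; exact: dens_ge0.
Qed.

Lemma has_sup_ldens B :
  has_sup [set x : R | exists E, E `<=` B /\ hasdens R E /\ dens R E = x].
Proof.
split; first by exists (dens R set0), set0; split=> //; split=> //; exact: hasdens_set0.
by exists 1 => _ [E [_ [hE <-]]]; exact: dens_le1.
Qed.

Lemma udens_le_dens A C : A `<=` C -> hasdens R C -> udens R A <= dens R C.
Proof. by move=> AC hC; apply: ge_inf (has_inf_udens A).2 _ _; exists C. Qed.

Lemma dens_le_ldens E B : E `<=` B -> hasdens R E -> dens R E <= ldens R B.
Proof. by move=> EB hE; apply: ub_le_sup (has_sup_ldens B).2 _ _; exists E. Qed.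

Lemma udens_approx A (e : R) : 0 < e ->
  exists C, A `<=` C /\ hasdens R C /\ dens R C < udens R A + e.
Proof.
move=> e0; have [_ [C [AC [hC <-]]] ltC] := inf_adherent e0 (has_inf_udens A).
by exists C.
Qed.

Lemma ldens_approx B (e : R) : 0 < e ->
  exists E, E `<=` B /\ hasdens R E /\ ldens R B - e < dens R E.
Proof.
move=> e0; have [_ [E [EB [hE <-]]] ltE] := sup_adherent e0 (has_sup_ldens B).
by exists E.
Qed.

End DensityEnvelopes.

Section Greedy.
Context {R : realType}.
Variables (A B : set nat) (u : R).

Fixpoint greedy_cnt n : R :=
  if n is k.+1 then
    greedy_cnt k +
      (if `[< A k.+1 \/ (B k.+1 /\ greedy_cnt k < u * k.+1%:R) >] then 1 else 0)
  else 0.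

Definition greedy : set nat := fun k => A k \/ (B k /\ greedy_cnt k.-1 < u * k%:R).

Lemma cntR_greedy n : cntR R greedy n = greedy_cnt n.
Proof.
elim: n => [|n IH]; first exact: cntR0.
rewrite cntRS IH /=; case: (pselect (greedy n.+1)) => h.
  by rewrite asboolT // indic_in.
by rewrite asboolF // indic_notin.
Qed.

Lemma sub_greedy : A `<=` greedy.
Proof. by move=> k Ak; left. Qed.

Lemma greedy_sub : A `<=` B -> greedy `<=` B.
Proof. by move=> AB k [/AB | []]. Qed.

Lemma greedy_cnt_ub C (lam K : R) : A `<=` C -> 0 <= lam ->
    (forall m, u * m%:R - cntR R C m <= lam * m%:R + K) ->
  forall n, greedy_cnt n <= cntR R C n + lam * n%:R + K + 1.
Proof.
move=> AC lam0 hC; elim=> [|n IH].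
  by have := hC 0%N; rewrite /= cntR0 !mulr0; lra.
have /andP[C0 C1] := @indic_ge0_le1 R C n.+1.
have lamS : lam * n.+1%:R = lam * n%:R + lam by rewrite -natr1 mulrDr mulr1.
rewrite /= cntRS lamS.
case: (pselect (A n.+1 \/ (B n.+1 /\ greedy_cnt n < u * n.+1%:R))) => [F|nF]; last first.
  by rewrite asboolF //; lra.
rewrite asboolT //; case: F => [An | [_ lt]].
  by rewrite indic_in; [lra | exact: AC].
by have := hC n.+1; rewrite cntRS lamS; lra.
Qed.

Lemma greedy_cnt_lb (lam L : R) : 0 <= lam ->
    (forall m, cntR R B m - u * m%:R <= lam * m%:R + L) ->
  forall n, cntR R B n - lam * n%:R - L <= greedy_cnt n.
Proof.
move=> lam0 hB; elim=> [|n IH].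
  by have := hB 0%N; rewrite /= cntR0 !mulr0; lra.
have /andP[B0 B1] := @indic_ge0_le1 R B n.+1.
have lamS : lam * n.+1%:R = lam * n%:R + lam by rewrite -natr1 mulrDr mulr1.
rewrite /= cntRS lamS.
case: (pselect (A n.+1 \/ (B n.+1 /\ greedy_cnt n < u * n.+1%:R))) => [F|nF].
  by rewrite asboolT //; lra.
rewrite asboolF //.
case: (pselect (B n.+1)) => [Bn|nBn]; last by rewrite indic_notin //; lra.
have : u * n.+1%:R <= greedy_cnt n by rewrite leNgt; apply/negP => lt; apply: nF; right.
by have := hB n.+1; rewrite cntRS lamS; lra.
Qed.

Lemma greedy_cvg : A `<=` B -> hasdens R B ->
    (forall C, A `<=` C -> hasdens R C -> u <= dens R C) ->
    (forall e, 0 < e -> exists C, A `<=` C /\ hasdens R C /\ dens R C < u + e) ->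
  ratio R greedy @ \oo --> u.
Proof.
move=> AB hB u_lb u_approx; apply/ratio_cvgP => e e0.
pose eps := e / 3.
have eps0 : 0 < eps by rewrite divr_gt0.
have [C [AC [hC ltC]]] := u_approx eps eps0.
have [K HK] := (ratio_cvgP C (dens R C)).1 hC eps eps0.
have [L HL] := (ratio_cvgP B (dens R B)).1 hB eps eps0.
have uC := u_lb C AC hC; have uB := u_lb B AB hB.
set c := dens R C in ltC HK uC; set b := dens R B in HL uB.
have ub : forall n, greedy_cnt n <= cntR R C n + eps * n%:R + K + 1.
  apply: greedy_cnt_ub (ltW eps0) _ => // m.
  have /ler_normlP[lo _] := HK m.
  have := ler_wpM2r (ler0n R m) uC; lra.
have lb : forall n, cntR R B n - (b - u + eps) * n%:R - L <= greedy_cnt n.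
  apply: greedy_cnt_lb; first lra.
  by move=> m; have /ler_normlP[_ hi] := HL m; lra.
exists (2 * K + 2 * L + 1) => n; rewrite cntR_greedy.
have /ler_normlP[loC hiC] := HK n; have /ler_normlP[loB hiB] := HL n.
have cn := ler_wpM2r (ler0n R n) (ltW ltC).
have e3 : e = 3 * eps by rewrite /eps mulrC divfK ?pnatr_eq0.
have := HK 0%N; have := HL 0%N; rewrite !cntR0 !mulr0 subrr normr0 !add0r => L0 K0.
have epsn : 0 <= eps * n%:R by rewrite mulr_ge0 // ltW.
have ubn := ub n; have lbn := lb n; rewrite e3; apply/ler_normlP; split; lra.
Qed.

End Greedy.

Lemma exists_dens_between (R : realType) (A B : set nat) (u : R) :
    A `<=` B -> hasdens R B ->
    (forall C, A `<=` C -> hasdens R C -> u <= dens R C) ->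
    (forall e, 0 < e -> exists C, A `<=` C /\ hasdens R C /\ dens R C < u + e) ->
  exists C, hasdens R C /\ dens R C = u /\ A `<=` C /\ C `<=` B.
Proof.
move=> AB hB u_lb u_approx.
have cvgG : ratio R (greedy A B u) @ \oo --> u by exact: greedy_cvg.
exists (greedy A B u); split; first exact: cvgP cvgG.
split; first exact: cvg_lim cvgG.
by split; [exact: sub_greedy | exact: greedy_sub].
Qed.

Theorem proposition3p12 (R : realType) (A B : set nat) :
  A `<=` B ->
  (hasdens R B ->
     exists C : set nat, hasdens R C /\ dens R C = udens R A /\ A `<=` C /\ C `<=` B) /\
  (hasdens R A ->
     exists C : set nat, hasdens R C /\ dens R C = ldens R B /\ A `<=` C /\ C `<=` B).
Proof.
move=> AB; split=> [hB | hA].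
  apply: exists_dens_between => // [C AC hC | e e0].
  - exact: udens_le_dens.
  - exact: udens_approx.
have [C [hC [dC [BC CA]]]] : exists C, hasdens R C /\ dens R C = 1 - ldens R B /\
    ~` B `<=` C /\ C `<=` ~` A.
  apply: exists_dens_between (subsetC AB) (hasdens_setC _ hA) _ _ => [C BC hC | e e0].
  - have := dens_le_ldens _ _ (subsetCl BC) (hasdens_setC _ hC).
    by rewrite dens_setC //; lra.
  - have [E [EB [hE ltE]]] := ldens_approx B e e0.
    exists (~` E); split; first exact: subsetC.
    by rewrite dens_setC //; split; [exact: hasdens_setC | lra].
exists (~` C); split; first exact: hasdens_setC.
split; first by rewrite dens_setC // dC; lra.
by split; [exact: subsetCr | exact: subsetCl].
Qed.
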